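(* Let $(X,d)$ be a compact metric space with a finite Borel measure $\mu$. If a surjective map $\psi:X\to X$ is 1-Lipschitz and measure-contracting (i.e. $\mu(A)\le\mu(\psi^{-1}(A))$ for every Borel $A\subset X$), then $\psi$ is a measure-preserving isometry. *)

From HB Require Import structures.
From mathcomp Require Import all_boot all_order all_algebra.
From mathcomp Require Import all_classical all_reals all_analysis.
Set Implicit Arguments.
Unset Strict Implicit.
Unset Printing Implicit Defensive.

(* MathComp-Analysis measurable types must be pointed (nonempty).  We thus
   equip a type with a chosen point [x0] via the alias [pointed_at x0]. *)
Definition pointed_at (T : choiceType) (x0 : T) : Type := T.
HB.instance Definition _ (T : choiceType) (x0 : T) :=
  Choice.on (pointed_at x0).
HB.instance Definition _ (T : choiceType) (x0 : T) :=
  isPointed.Build (pointed_at x0) x0.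

Definition open_sets (X : topologicalType) (x0 : X) : set (set (pointed_at x0)) :=
  @open X.

Notation borel X x0 := (g_sigma_algebraType (@open_sets X x0)).

From HB Require Import structures.
From mathcomp Require Import all_boot all_order all_algebra.
From mathcomp Require Import all_classical all_reals all_analysis.
From mathcomp Require Import lra.
Set Implicit Arguments.
Unset Strict Implicit.
Unset Printing Implicit Defensive.
Import Order.TTheory GRing.Theory Num.Theory.
Local Open Scope classical_set_scope.
Local Open Scope ring_scope.

(* Isometry: let g be a right inverse of psi and follow the backward orbits
   x_n = g^n x, y_n = g^n y.  Since psi^n maps (x_n, y_n) back to (x, y),
   d(x, y) <= d(x_n, y_n).  By compactness the pair (x_n, y_n) returns close
   to itself: d(x_i, x_j), d(y_i, y_j) < e for some i < j, and applying
   psi^(i+1) puts x_(j-i-1) within e of psi x and y_(j-i-1) within e of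
   psi y, so d(x, y) <= d(psi x, psi y) + 2e.
   Measure preservation: psi is continuous, hence Borel, and applying the
   contraction inequality to the complement of A gives the reverse inequality
   mu (psi^-1 A) <= mu A, since the total mass is finite. *)

Lemma iter_can (T : Type) (f g : T -> T) n :
  cancel g f -> cancel (iter n g) (iter n f).
Proof.
move=> gK; elim: n => // n IHn x.
by rewrite iterSr iterS gK IHn.
Qed.

Lemma compact_seq_cluster (T : topologicalType) (w : nat -> T) :
  compact [set: T] ->
  exists p : T, forall B N, nbhs p B -> exists2 n, (N <= n)%N & B (w n).
Proof.
move=> cT; have [|p [_ clp]] := cT (w @ \oo) _ _; first exact: filterT.
exists p => B N pB.
have [|_ [[n Nn <-] Bwn]] := clp (w @` [set n | (N <= n)%N]) B _ pB.
  by exists N => // n /= Nn; exists n.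
by exists n.
Qed.

Lemma compact_pair_recurrence (R : realType) (X : metricType R)
    (u v : nat -> X) (e : R) :
  compact [set: X] -> 0 < e ->
  exists i j, [/\ (i < j)%N, mdist (u i) (u j) < e & mdist (v i) (v j) < e].
Proof.
move=> cX e0.
have cXX : compact [set: X * X] by rewrite -setXTT; exact: compact_setX.
have [p clp] := compact_seq_cluster (fun n => (u n, v n)) cXX.
have e20 : 0 < e / 2 by rewrite divr_gt0.
have [i _ [ui vi]] := clp _ 0%N (nbhsx_ballx p _ e20).
have [j ij [uj vj]] := clp _ i.+1 (nbhsx_ballx p _ e20).
move: ui vi uj vj; rewrite !ballEmdist /= => ui vi uj vj.
exists i, j; split => //; rewrite [e]splitr.
- by apply: le_lt_trans (metric_triangle _ p.1 _) _; rewrite metric_sym ltrD.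
- by apply: le_lt_trans (metric_triangle _ p.2 _) _; rewrite metric_sym ltrD.
Qed.

Section nonexpansive.
Variables (R : realType) (X : metricType R) (psi : X -> X).
Hypothesis psi_nonexpansive : forall x y, mdist (psi x) (psi y) <= mdist x y.

Lemma iter_nonexpansive n x y :
  mdist (iter n psi x) (iter n psi y) <= mdist x y.
Proof.
elim: n => // n IHn; rewrite !iterS.
exact: le_trans (psi_nonexpansive _ _) IHn.
Qed.

Lemma nonexpansive_continuous : continuous psi.
Proof.
move=> x B /nbhs_ballP [e e0 xeB]; apply/nbhs_ballP; exists e => // y.
rewrite ballEmdist => xy; apply: xeB; rewrite ballEmdist /=.
exact: le_lt_trans (psi_nonexpansive _ _) xy.
Qed.

Variable g : X -> X.
Hypothesis psiK : cancel g psi.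

Lemma mdist_backward_orbit n x y :
  mdist x y <= mdist (iter n g x) (iter n g y).
Proof.
by have := iter_nonexpansive n (iter n g x) (iter n g y); rewrite !iter_can.
Qed.

Lemma mdist_psi_backward_orbit i k x :
  mdist (psi x) (iter k g x) <= mdist (iter i g x) (iter (i.+1 + k) g x).
Proof.
have := iter_nonexpansive i.+1 (iter i g x) (iter (i.+1 + k) g x).
by rewrite iterD iter_can // iterS iter_can.
Qed.

Lemma nonexpansive_surjection_isometry x y :
  compact [set: X] -> mdist (psi x) (psi y) = mdist x y.
Proof.
move=> cX; apply/eqP; rewrite eq_le psi_nonexpansive /=.
apply/ler_addgt0Pr => e e0.
have e20 : 0 < e / 2 by rewrite divr_gt0.
have [i [j [ij dx dy]]] :=
  compact_pair_recurrence (fun n => iter n g x) (fun n => iter n g y) cX e20.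
move: dx dy; rewrite -(subnKC ij); set k := (j - i.+1)%N => dx dy.
have hx := le_lt_trans (mdist_psi_backward_orbit i k x) dx.
have hy := le_lt_trans (mdist_psi_backward_orbit i k y) dy.
apply: le_trans (mdist_backward_orbit k x y) _.
apply: le_trans (metric_triangle _ (psi x) _) _.
apply: le_trans (lerD (lexx _) (metric_triangle _ (psi y) _)) _.
rewrite (metric_sym (iter k g x)).
move: (mdist (psi x) _) (mdist (psi y) _) (mdist (psi x) (psi y)) hx hy.
by move=> a b c ha hb; lra.
Qed.

End nonexpansive.

Lemma continuous_borel_measurable (X Y : topologicalType) (x0 : X) (y0 : Y)
    (f : X -> Y) :
  continuous f -> @measurable_fun _ _ (borel X x0) (borel Y y0) [set: borel X x0] f.
Proof.
move=> fc.
apply: (@measurability _ _ (borel X x0) (borel Y y0) _ _ (@open_sets Y y0)) => //.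
move=> _ [B oB <-]; apply: sub_sigma_algebra; rewrite setTI.
exact: (continuousP f).1 fc _ oB.
Qed.

Lemma measure_contracting_preserving d (T : measurableType d) (R : realType)
    (mu : {measure set T -> \bar R}) (f : T -> T) :
  (mu [set: T] < +oo)%E -> measurable_fun [set: T] f ->
  (forall A, measurable A -> mu A <= mu (f @^-1` A))%E ->
  forall A, measurable A -> mu (f @^-1` A) = mu A.
Proof.
move=> muT mf contracting A mA.
have mfA : measurable (f @^-1` A) by rewrite -[_ @^-1` _]setTI; exact: mf.
apply/eqP; rewrite eq_le contracting // andbT.
have fin C : measurable C -> mu C \is a fin_num.
  move=> mC; rewrite ge0_fin_numE //; apply: le_lt_trans muT.
  by apply: le_measure; rewrite ?inE.
have le_compl : (mu [set: T] - mu A <= mu [set: T] - mu (f @^-1` A))%E.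
  have := contracting _ (measurableD measurableT mA).
  by rewrite !setTD -preimage_setC -!setTD !measureD // !setTI.
move: le_compl (fin _ mA) (fin _ mfA) (fin _ measurableT).
move: (mu A) (mu (f @^-1` A)) (mu setT) => [a||] [b||] [c||] //= + _ _ _.
by rewrite -!EFinB !lee_fin; lra.
Qed.

Theorem lemma3p8 (R : realType) (X : metricType R) (x0 : X)
  (mu : {measure set (borel X x0) -> \bar R})
  (psi : X -> X) :
  compact [set: X] ->
  (mu [set: borel X x0] < +oo)%E ->
  (forall y : X, exists x : X, psi x = y) ->
  (forall x y : X, mdist (psi x) (psi y) <= mdist x y) ->
  (forall A : set (borel X x0), measurable A -> (mu A <= mu (psi @^-1` A))%E) ->
  (forall x y : X, mdist (psi x) (psi y) = mdist x y) /\
  (@measurable_fun _ _ (borel X x0) (borel X x0) [set: borel X x0] psi /\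
   forall A : set (borel X x0), measurable A -> mu (psi @^-1` A) = mu A).
Proof.
move=> cX muT surj psi_nonexpansive psi_contracting.
have [g psiK] := choice surj.
have psi_measurable := @continuous_borel_measurable _ _ x0 x0 _
  (nonexpansive_continuous psi_nonexpansive).
split=> [x y|]; first exact: nonexpansive_surjection_isometry psiK x y cX.
by split=> //; exact: measure_contracting_preserving.
Qed.
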